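(* For every $n\ge4$, the space $\mathrm{CSN}_n$, with the length metric obtained by giving each orthant $O_\pi$ its Euclidean metric and gluing, is not a CAT(0) space.
   Context: $X$ is a set of $n\ge4$ labels. A split of $X$ is an unordered partition of $X$ into two nonempty sets; it is trivial if one part is a singleton. A circular ordering of $X$ is a cyclic arrangement $\pi=(x_1,\dots,x_n)$ up to rotation and reflection; a split is circular w.r.t. $\pi$ if it has the form $\{\{x_{i+1},\dots,x_j\},X\setminus\{x_{i+1},\dots,x_j\}\}$ (indices mod $n$). Let $\delta=2^{n-1}-n-1$ and give $\mathbb R^\delta$ coordinates indexed by nontrivial splits. For each circular ordering $\pi$, $O_\pi\subset\mathbb R^\delta$ is the set of nonnegative vectors whose support consists of splits circular w.r.t. $\pi$ (an orthant of dimension $n(n-3)/2$), and $\mathrm{CSN}_n=\bigcup_\pi O_\pi$. *)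

From mathcomp Require Import all_boot all_fingroup.
From Stdlib Require Import Reals.

Set Implicit Arguments.
Unset Strict Implicit.
Unset Printing Implicit Defensive.

(* An unordered split {A, X \ A} is represented by its part NOT containing
   the label ord0-equivalent 0; nontrivial means both parts have >= 2 elems. *)
Definition nontriv_split (n : nat) (A : {set 'I_n}) : bool :=
  [&& [forall x : 'I_n, (val x == 0%N) ==> (x \notin A)],
      (2 <= #|A|)%N & (2 <= n - #|A|)%N].

(* circular ordering pi = (p 0, p 1, ..., p (n-1)); position of x is p^-1 x.
   cyc_interval p i k = the k consecutive labels starting at position i. *)
Definition cyc_interval (n : nat) (p : {perm 'I_n}) (i k : nat) : {set 'I_n} :=
  [set x : 'I_n | (((val ((p^-1)%g x) + n - i) %% n) < k)%N].

Definition circular (n : nat) (p : {perm 'I_n}) (A : {set 'I_n}) : Prop :=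
  exists i k : nat, (i < n)%N /\ (0 < k < n)%N /\
    (A = cyc_interval p i k \/ ~: A = cyc_interval p i k).

(* A point has a coordinate for every subset; only coordinates indexed by
   (representatives of) nontrivial splits may be nonzero on CSN_n. *)
Definition pt (n : nat) := {set 'I_n} -> R.

Definition edist (n : nat) (x y : pt n) : R :=
  sqrt (\big[Rplus/0%R]_(A : {set 'I_n}) Rsqr (x A - y A)).

Definition in_orthant (n : nat) (p : {perm 'I_n}) (v : pt n) : Prop :=
  forall A : {set 'I_n}, (0 <= v A)%R /\
    (v A <> 0%R -> nontriv_split A /\ circular p A).

Definition in_CSN (n : nat) (v : pt n) : Prop :=
  exists p : {perm 'I_n}, in_orthant p v.

(* strings x = x0, x1, ..., xk = y with consecutive points in a common
   orthant (Bridson-Haefliger I.7.4); the length is the sum of Euclidean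
   distances, and the glued metric is the infimum of string lengths. *)
Fixpoint is_string (n : nat) (x : pt n) (l : list (pt n)) : Prop :=
  match l with
  | nil => True
  | y :: l' => (exists p : {perm 'I_n}, in_orthant p x /\ in_orthant p y)
               /\ is_string y l'
  end.

Fixpoint string_len (n : nat) (x : pt n) (l : list (pt n)) : R :=
  match l with
  | nil => 0%R
  | y :: l' => (edist x y + string_len y l')%R
  end.

Definition string_lengths (n : nat) (x y : pt n) (r : R) : Prop :=
  exists l : list (pt n), is_string x l /\ last x l = y /\ r = string_len x l.

Definition is_glb (E : R -> Prop) (m : R) : Prop :=
  (forall r, E r -> (m <= r)%R) /\
  (forall b, (forall r, E r -> (b <= r)%R) -> (b <= m)%R).

Definition geodesic {T : Type} (S : T -> Prop) (d : T -> T -> R)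
  (x y : T) (g : R -> T) : Prop :=
  g 0%R = x /\ g (d x y) = y /\
  (forall s, (0 <= s <= d x y)%R -> S (g s)) /\
  (forall s t, (0 <= s <= d x y)%R -> (0 <= t <= d x y)%R ->
     d (g s) (g t) = Rabs (s - t)).

Definition geodesic_space {T : Type} (S : T -> Prop) (d : T -> T -> R) : Prop :=
  forall x y, S x -> S y -> exists g, geodesic S d x y g.

Definition dE2 (P Q : R * R) : R :=
  sqrt (Rsqr (fst P - fst Q) + Rsqr (snd P - snd Q)).

Definition cmp_pt (P Q : R * R) (L s : R) : R * R :=
  (fst P + (s / L) * (fst Q - fst P), snd P + (s / L) * (snd Q - snd P))%R.

Definition succ3 (k : nat) : nat := ((k + 1) %% 3)%N.

Definition CAT0_ineq {T : Type} (S : T -> Prop) (d : T -> T -> R) : Prop :=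
  forall (v : nat -> T) (g : nat -> R -> T) (V : nat -> R * R),
    (forall k, (k < 3)%N -> S (v k)) ->
    (forall k, (k < 3)%N -> geodesic S d (v k) (v (succ3 k)) (g k)) ->
    (forall k, (k < 3)%N -> dE2 (V k) (V (succ3 k)) = d (v k) (v (succ3 k))) ->
    forall k l s t, (k < 3)%N -> (l < 3)%N ->
      (0 <= s <= d (v k) (v (succ3 k)))%R ->
      (0 <= t <= d (v l) (v (succ3 l)))%R ->
      (d (g k s) (g l t) <=
       dE2 (cmp_pt (V k) (V (succ3 k)) (d (v k) (v (succ3 k))) s)
           (cmp_pt (V l) (V (succ3 l)) (d (v l) (v (succ3 l))) t))%R.

Definition CAT0 {T : Type} (S : T -> Prop) (d : T -> T -> R) : Prop :=
  geodesic_space S d /\ CAT0_ineq S d.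

(* Let e1, e2, e3 be the unit vectors of the three splits {1,2}|rest, {1,3,...}|{0,2} and
   {2,3,...}|{0,1}.  Any two of these splits are circular for a common ordering, so any two
   of the e_i are joined by a Euclidean segment of length sqrt 2 inside one orthant: this
   gives a geodesic triangle with an equilateral comparison triangle.  In a CAT(0) space the
   midpoints m1 of [e1, e2] and m2 of [e3, e1] would be at distance at most sqrt 2 / 2,
   which is their Euclidean distance.  Since the glued metric dominates the Euclidean
   distance of the (e1, e2, e3)-coordinates, the midpoint of a geodesic from m1 to m2 is
   then forced to be (1/2, 1/4, 1/4), a point whose three coordinates are all nonzero.  But
   no circular ordering makes the three splits circular at once: of the three ways to pair
   up four points of a circle, one pairing always consists of crossing chords. *)

From HB Require Import structures.
From mathcomp Require Import all_boot all_fingroup zify.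
From Stdlib Require Import Reals Lra FunctionalExtensionality.

Set Implicit Arguments.
Unset Strict Implicit.
Unset Printing Implicit Defensive.

HB.instance Definition _ := Monoid.isComLaw.Build R 0%R Rplus
  (fun x y z => esym (Rplus_assoc x y z)) Rplus_comm Rplus_0_l.

(* Read as points of a circle, [unlinked x y z w] says that the chords {x, y} and {z, w}
   do not cross. *)
Definition between (x y z : nat) : bool := (x < z < y) || (y < z < x).

Definition unlinked (x y z w : nat) : bool := between x y z == between x y w.

Lemma unlinked_sym x y z w : x != z -> x != w -> y != z -> y != w ->
  unlinked x y z w = unlinked z w x y.
Proof. rewrite /unlinked /between; lia. Qed.

Lemma quartet_linked x0 x1 x2 x3 : uniq [:: x0; x1; x2; x3] ->
  ~~ [&& unlinked x1 x2 x0 x3, unlinked x1 x3 x0 x2 & unlinked x2 x3 x0 x1].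
Proof. rewrite /unlinked /between /= !inE; lia. Qed.

Lemma cyc_shift_lt n i k y : y < n -> i < n ->
  ((y + n - i) %% n < k) = ((i <= y < i + k) || ((y < i) && (y + n < i + k))).
Proof.
move=> yn ilt; case: (leqP i y) => iy /=.
- have -> : y + n - i = (y - i) + n by lia.
  by rewrite modnDr modn_small; [apply/idP/idP; lia | lia].
- by rewrite modn_small; [apply/idP/idP; lia | lia].
Qed.

Definition pos n (p : {perm 'I_n}) (x : 'I_n) : nat := (p^-1)%g x.

Lemma mem_cyc_interval n (p : {perm 'I_n}) i k x : i < n ->
  (x \in cyc_interval p i k) =
  (i <= pos p x < i + k) || ((pos p x < i) && (pos p x + n < i + k)).
Proof. by move=> ilt; rewrite inE cyc_shift_lt // ltn_ord. Qed.

Lemma pos_lt n (p : {perm 'I_n}) x : pos p x < n.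
Proof. exact: ltn_ord. Qed.

Lemma cyc_interval_unlinked n (p : {perm 'I_n}) i k x y z w : i < n ->
  x \in cyc_interval p i k -> y \in cyc_interval p i k ->
  z \notin cyc_interval p i k -> w \notin cyc_interval p i k ->
  unlinked (pos p x) (pos p y) (pos p z) (pos p w).
Proof.
move=> ilt; rewrite !mem_cyc_interval // /unlinked /between.
by have := pos_lt p x; have := pos_lt p y; have := pos_lt p z; have := pos_lt p w; lia.
Qed.

Lemma pos_inj n (p : {perm 'I_n}) : injective (pos p).
Proof. by move=> u v /val_inj /perm_inj. Qed.

Lemma circular_unlinked n (p : {perm 'I_n}) (A : {set 'I_n}) x y z w :
  circular p A -> x \in A -> y \in A -> z \notin A -> w \notin A ->
  unlinked (pos p x) (pos p y) (pos p z) (pos p w).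
Proof.
move=> [i [k [ilt [_ [->|defC]]]]] xA yA zA wA; first exact: cyc_interval_unlinked ilt xA yA zA wA.
have neq u v : u \in A -> v \notin A -> pos p u != pos p v.
  by move=> uA vA; rewrite (inj_eq (@pos_inj _ p)); apply: (contraNneq _ vA) => <-.
have inC u : (u \in cyc_interval p i k) = (u \notin A) by rewrite -defC inE.
rewrite unlinked_sym ?neq //.
by apply: (@cyc_interval_unlinked _ p i k); rewrite ?inC ?negbK.
Qed.

Lemma circular_quartet n (p : {perm 'I_n}) (x0 x1 x2 x3 : 'I_n) (A B C : {set 'I_n}) :
  uniq [:: x0; x1; x2; x3] ->
  [/\ x1 \in A, x2 \in A, x0 \notin A & x3 \notin A] ->
  [/\ x1 \in B, x3 \in B, x0 \notin B & x2 \notin B] ->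
  [/\ x2 \in C, x3 \in C, x0 \notin C & x1 \notin C] ->
  ~ [/\ circular p A, circular p B & circular p C].
Proof.
move=> uq [a1 a2 a0 a3] [b1 b3 b0 b2] [c2 c3 c0 c1] [cA cB cC].
have uq_pos : uniq [:: pos p x0; pos p x1; pos p x2; pos p x3].
  by rewrite (map_inj_uniq (@pos_inj _ p) [:: x0; x1; x2; x3]).
apply/negP: (quartet_linked uq_pos).
by rewrite (circular_unlinked cA a1 a2 a0 a3) (circular_unlinked cB b1 b3 b0 b2)
  (circular_unlinked cC c2 c3 c0 c1).
Qed.

Section Quartet.
Variable m : nat.
Local Notation n := m.+4.

Definition x0 : 'I_n := @Ordinal n 0 isT.
Definition x1 : 'I_n := @Ordinal n 1 isT.
Definition x2 : 'I_n := @Ordinal n 2 isT.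
Definition x3 : 'I_n := @Ordinal n 3 isT.

Definition split12 : {set 'I_n} := [set x1; x2].
Definition split13 : {set 'I_n} := ~: [set x0; x2].
Definition split23 : {set 'I_n} := ~: [set x0; x1].

Lemma split_quartet (p : {perm 'I_n}) :
  ~ [/\ circular p split12, circular p split13 & circular p split23].
Proof. by apply: (circular_quartet (x0 := x0) (x1 := x1) (x2 := x2) (x3 := x3)); rewrite ?inE. Qed.

Lemma nontriv_split_pair (x y : 'I_n) : val x != 0 -> val y != 0 -> x != y ->
  nontriv_split [set x; y].
Proof.
move=> nx ny xy; rewrite /nontriv_split cards2 xy; apply/and3P; split => //.
apply/forallP => z; apply/implyP => /eqP z0.
by rewrite !inE -!(inj_eq val_inj) z0 ![0 == _]eq_sym negb_or nx ny.
Qed.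

Lemma nontriv_split_copair (y : 'I_n) : val y != 0 -> nontriv_split (~: [set x0; y]).
Proof.
move=> ny; have x0y : x0 != y by apply: contra_neq ny => <-.
have card_co : #|~: [set x0; y]| = m.+2.
  by have := cardsC [set x0; y]; rewrite cards2 x0y card_ord; lia.
rewrite /nontriv_split card_co; apply/and3P; split; try lia.
by apply/forallP => z; apply/implyP => /eqP z0; rewrite !inE negbK (_ : z = x0) ?eqxx //; apply: val_inj.
Qed.

Lemma nontriv_split12 : nontriv_split split12.
Proof. exact: nontriv_split_pair. Qed.
Lemma nontriv_split13 : nontriv_split split13.
Proof. exact: nontriv_split_copair. Qed.
Lemma nontriv_split23 : nontriv_split split23.
Proof. exact: nontriv_split_copair. Qed.

Lemma val_tperm (a b x : 'I_n) :
  val (tperm a b x) = if x == a then val b else if x == b then val a else val x.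
Proof.
case: (x =P a) => [->|/eqP xa]; first by rewrite tpermL.
case: (x =P b) => [->|/eqP xb]; first by rewrite tpermR.
by rewrite tpermD // eq_sym.
Qed.

Let eq_ord (x y : 'I_n) : (x == y) = (val x == val y). Proof. by []. Qed.

Ltac cyc_interval_tac := apply/setP => -[[|[|[|y]]] hy];
  rewrite mem_cyc_interval // /pos ?invg1 ?perm1 ?tpermV ?val_tperm !inE ?eq_ord /=;
  apply/idP/idP; lia.

Ltac circular_tac i k := exists i, k; split; [done | split; [lia | left; cyc_interval_tac]].

Lemma circular1_split12 : circular 1 split12.
Proof. circular_tac 1 2. Qed.
Lemma circular1_split23 : circular 1 split23.
Proof. circular_tac 2 m.+2. Qed.
Lemma circular12_split12 : circular (tperm x1 x2) split12.
Proof. circular_tac 1 2. Qed.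
Lemma circular12_split13 : circular (tperm x1 x2) split13.
Proof. circular_tac 2 m.+2. Qed.
Lemma circular01_split13 : circular (tperm x0 x1) split13.
Proof. circular_tac 3 m.+2. Qed.
Lemma circular01_split23 : circular (tperm x0 x1) split23.
Proof. circular_tac 2 m.+2. Qed.

End Quartet.

Local Open Scope R_scope.

Lemma sqr3_ge0 u v w : 0 <= u² + v² + w².
Proof. by have := Rle_0_sqr u; have := Rle_0_sqr v; have := Rle_0_sqr w; lra. Qed.

Lemma euclid3_triangle u1 u2 u3 v1 v2 v3 :
  sqrt ((u1 + v1)² + (u2 + v2)² + (u3 + v3)²) <=
  sqrt (u1² + u2² + u3²) + sqrt (v1² + v2² + v3²).
Proof.
set U := u1² + u2² + u3²; set V := v1² + v2² + v3².
have U0 : 0 <= U := sqr3_ge0 _ _ _; have V0 : 0 <= V := sqr3_ge0 _ _ _.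
have UU := sqrt_sqrt U U0; have VV := sqrt_sqrt V V0.
have sU := sqrt_pos U; have sV := sqrt_pos V.
have cauchy_schwarz : u1 * v1 + u2 * v2 + u3 * v3 <= sqrt U * sqrt V.
  case: (Rle_or_lt (u1 * v1 + u2 * v2 + u3 * v3) 0) => [|pos_uv]; first nra.
  rewrite -sqrt_mult_alt // -(sqrt_Rsqr (u1 * v1 + u2 * v2 + u3 * v3)); last lra.
  apply: sqrt_le_1_alt; rewrite /U /V.
  have := Rle_0_sqr (u1 * v2 - u2 * v1); have := Rle_0_sqr (u1 * v3 - u3 * v1).
  have := Rle_0_sqr (u2 * v3 - u3 * v2); rewrite /Rsqr; nra.
rewrite -(sqrt_Rsqr (sqrt U + sqrt V)); last lra.
apply: sqrt_le_1_alt; rewrite /U /V /Rsqr in UU VV cauchy_schwarz *; nra.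
Qed.

Definition lerp n (x y : pt n) (t : R) : pt n := fun A => x A + t * (y A - x A).

Lemma in_orthant_lerp n (p : {perm 'I_n}) x y t :
  in_orthant p x -> in_orthant p y -> 0 <= t <= 1 -> in_orthant p (lerp x y t).
Proof.
move=> ox oy t01 A; have [x0 xA] := ox A; have [y0 yA] := oy A.
split; first by rewrite /lerp; nra.
case: (Req_dec (x A) 0) => [x_0|]; last by move=> /xA.
case: (Req_dec (y A) 0) => [y_0|]; last by move=> /yA.
by rewrite /lerp x_0 y_0; lra.
Qed.

Section Span3.
Variables (n : nat) (A1 A2 A3 : {set 'I_n}).
Hypotheses (A12 : A1 != A2) (A13 : A1 != A3) (A23 : A2 != A3).

Definition supported3 (x : pt n) : Prop := forall A, A \notin [:: A1; A2; A3] -> x A = 0.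

Definition dist3 (x y : pt n) : R :=
  sqrt ((x A1 - y A1)² + (x A2 - y A2)² + (x A3 - y A3)²).

Lemma dist3_ge0 x y : 0 <= dist3 x y.
Proof. exact: sqrt_pos. Qed.

Lemma dist3_eq x y r : 0 <= r ->
  (x A1 - y A1)² + (x A2 - y A2)² + (x A3 - y A3)² = r² -> dist3 x y = r.
Proof. by move=> r0; rewrite /dist3 => ->; exact: sqrt_Rsqr. Qed.

Lemma edist_split3 x y : edist x y =
  sqrt ((x A1 - y A1)² + (x A2 - y A2)² + (x A3 - y A3)² +
        \big[Rplus/0]_(A | (A != A1) && (A != A2) && (A != A3)) (x A - y A)²).
Proof.
rewrite /edist (bigD1 A1) // (bigD1 A2) /=; last by rewrite eq_sym A12.
rewrite (bigD1 A3) /=; last by rewrite eq_sym A13 eq_sym A23.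
by congr sqrt; rewrite -!Rplus_assoc.
Qed.

Lemma dist3_le_edist x y : dist3 x y <= edist x y.
Proof.
rewrite edist_split3; apply: sqrt_le_1_alt.
have : 0 <= \big[Rplus/0]_(A | (A != A1) && (A != A2) && (A != A3)) (x A - y A)².
  by apply: big_ind => [|u v|A _]; [lra | lra | exact: Rle_0_sqr].
lra.
Qed.

Lemma edist_supported3 x y : supported3 x -> supported3 y -> edist x y = dist3 x y.
Proof.
move=> sx sy; rewrite edist_split3 big1 ?Rplus_0_r // => A /andP [/andP [nA1 nA2] nA3].
by rewrite sx ?sy ?inE ?negb_or ?nA1 ?nA2 ?nA3 // /Rsqr; ring.
Qed.

Lemma dist3_sqr x y : dist3 x y * dist3 x y = (x A1 - y A1)² + (x A2 - y A2)² + (x A3 - y A3)².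
Proof. exact/sqrt_sqrt/sqr3_ge0. Qed.

Lemma dist3_triangle x y z : dist3 x z <= dist3 x y + dist3 y z.
Proof.
rewrite /dist3.
have diff u v w : u - w = (u - v) + (v - w) by ring.
rewrite (diff (x A1) (y A1) (z A1)) (diff (x A2) (y A2) (z A2)) (diff (x A3) (y A3) (z A3)).
exact: euclid3_triangle.
Qed.

Lemma dist3_le_string_len x l : dist3 x (last x l) <= string_len x l.
Proof.
elim: l x => [|y l IH] x /=.
  by rewrite /dist3 !Rminus_diag /Rsqr !Rmult_0_r !Rplus_0_r sqrt_0; lra.
have := dist3_triangle x y (last y l); have := dist3_le_edist x y; have := IH y; lra.
Qed.

Definition comb3 (a b c : R) : pt n := fun A =>
  (if A == A1 then a else 0) + (if A == A2 then b else 0) + (if A == A3 then c else 0).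

Lemma comb3_1 a b c : comb3 a b c A1 = a.
Proof. by rewrite /comb3 eqxx (negbTE A12) (negbTE A13); ring. Qed.
Lemma comb3_2 a b c : comb3 a b c A2 = b.
Proof. by rewrite /comb3 eqxx eq_sym (negbTE A12) (negbTE A23); ring. Qed.
Lemma comb3_3 a b c : comb3 a b c A3 = c.
Proof. by rewrite /comb3 eqxx eq_sym (negbTE A13) eq_sym (negbTE A23); ring. Qed.

Lemma comb3_supported a b c : supported3 (comb3 a b c).
Proof.
by move=> A; rewrite /comb3 !inE !negb_or => /and3P [/negbTE -> /negbTE -> /negbTE ->]; ring.
Qed.

Lemma lerp_comb3 a b c a' b' c' t : lerp (comb3 a b c) (comb3 a' b' c') t =
  comb3 (a + t * (a' - a)) (b + t * (b' - b)) (c + t * (c' - c)).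
Proof.
by apply: functional_extensionality => A; rewrite /lerp /comb3; do 3!case: ifP => _; ring.
Qed.

Lemma lerp_supported3 x y t : supported3 x -> supported3 y -> supported3 (lerp x y t).
Proof. by move=> sx sy A nA; rewrite /lerp sx ?sy //; ring. Qed.

Lemma in_orthant_comb3 p a b c :
  nontriv_split A1 -> nontriv_split A2 -> nontriv_split A3 ->
  0 <= a -> 0 <= b -> 0 <= c ->
  (a <> 0 -> circular p A1) -> (b <> 0 -> circular p A2) -> (c <> 0 -> circular p A3) ->
  in_orthant p (comb3 a b c).
Proof.
move=> nt1 nt2 nt3 a0 b0 c0 ca cb cc A.
case: (A =P A1) => [->|/eqP nA1]; first by rewrite comb3_1; split=> // /ca.
case: (A =P A2) => [->|/eqP nA2]; first by rewrite comb3_2; split=> // /cb.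
case: (A =P A3) => [->|/eqP nA3]; first by rewrite comb3_3; split=> // /cc.
by rewrite comb3_supported ?inE ?negb_or ?nA1 ?nA2 ?nA3 //; split => //; lra.
Qed.

Lemma midpoint_rigid3 x y h r : dist3 x h <= r -> dist3 h y <= r -> 2 * r <= dist3 x y ->
  [/\ h A1 = (x A1 + y A1) / 2, h A2 = (x A2 + y A2) / 2 & h A3 = (x A3 + y A3) / 2].
Proof.
rewrite /dist3 => xh hy xy.
have r0 : 0 <= r by have := sqrt_pos ((x A1 - h A1)² + (x A2 - h A2)² + (x A3 - h A3)²); lra.
have sqrt_le S : 0 <= S -> sqrt S <= r -> S <= r².
  by move=> S0; rewrite -{1}(sqrt_Rsqr r r0); apply: sqrt_le_0 => //; exact: Rle_0_sqr.
have le_sqrt S : 0 <= S -> 2 * r <= sqrt S -> (2 * r)² <= S.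
  move=> S0; rewrite -{1}(sqrt_Rsqr (2 * r)); last lra.
  by apply: sqrt_le_0 => //; exact: Rle_0_sqr.
have := sqrt_le _ (sqr3_ge0 _ _ _) xh; have := sqrt_le _ (sqr3_ge0 _ _ _) hy.
have := le_sqrt _ (sqr3_ge0 _ _ _) xy; rewrite /Rsqr => ? ? ?.
have parallelogram : (x A1 + y A1 - 2 * h A1)² + (x A2 + y A2 - 2 * h A2)² +
  (x A3 + y A3 - 2 * h A3)² <= 0 by rewrite /Rsqr; nra.
have sq0 u v w : u² + v² + w² <= 0 -> [/\ u = 0, v = 0 & w = 0].
  have := Rle_0_sqr u; have := Rle_0_sqr v; have := Rle_0_sqr w.
  by move=> ? ? ? ?; split; apply: Rsqr_0_uniq; lra.
by have [? ? ?] := sq0 _ _ _ parallelogram; split; lra.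
Qed.

Section Glued.
Variable d : pt n -> pt n -> R.
Hypothesis hd : forall x y : pt n, in_CSN x -> in_CSN y ->
  is_glb (string_lengths x y) (d x y).

Lemma dist3_le_glued x y : in_CSN x -> in_CSN y -> dist3 x y <= d x y.
Proof.
move=> cx cy; apply: (proj2 (hd cx cy)) => r [l [_ [<- ->]]].
exact: dist3_le_string_len.
Qed.

Lemma glued_le_edist p x y : in_orthant p x -> in_orthant p y -> d x y <= edist x y.
Proof.
move=> ox oy; have cx : in_CSN x by exists p.
have cy : in_CSN y by exists p.
rewrite -[edist x y]Rplus_0_r; apply: (proj1 (hd cx cy)).
by exists [:: y]; do 2!split => //; exists p.
Qed.

Lemma glued_supported3 p x y : in_orthant p x -> in_orthant p y ->
  supported3 x -> supported3 y -> d x y = dist3 x y.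
Proof.
move=> ox oy sx sy; apply: Rle_antisym.
  by rewrite -edist_supported3 //; exact: glued_le_edist ox oy.
by apply: dist3_le_glued; [exists p | exists p].
Qed.

Lemma lerp_geodesic p x y : in_orthant p x -> in_orthant p y ->
  supported3 x -> supported3 y -> 0 < dist3 x y ->
  geodesic (@in_CSN n) d x y (fun s => lerp x y (s / dist3 x y)).
Proof.
move=> ox oy sx sy; set L := dist3 x y => L0.
have oL s : 0 <= s <= L -> in_orthant p (lerp x y (s / L)).
  move=> s0L; apply: in_orthant_lerp => //; split.
    by apply: Rmult_le_pos; [lra | apply/Rlt_le/Rinv_0_lt_compat].
  by apply/(Rmult_le_reg_r L) => //; rewrite /Rdiv Rmult_assoc Rinv_l; lra.
have sL s : supported3 (lerp x y (s / L)) by exact: lerp_supported3.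
rewrite /geodesic (glued_supported3 ox oy sx sy) -/L; split; [|split; [|split]].
- by apply: functional_extensionality => A; rewrite /lerp /Rdiv; ring.
- by apply: functional_extensionality => A; rewrite /lerp; field; lra.
- by move=> s /oL; exists p.
move=> s t /oL os /oL ot; rewrite (glued_supported3 os ot (sL s) (sL t)).
rewrite -sqrt_Rsqr_abs {1}/dist3 /lerp; congr sqrt.
transitivity ((s - t)² / (L * L) * ((x A1 - y A1)² + (x A2 - y A2)² + (x A3 - y A3)²)).
  by rewrite /Rsqr; field; lra.
by rewrite -dist3_sqr -/L; field; lra.
Qed.

End Glued.

End Span3.

Lemma geodesic_midpoint {T : Type} (S : T -> Prop) (d : T -> T -> R) x y g :
  geodesic S d x y g -> 0 <= d x y ->
  [/\ S (g (d x y / 2)), d x (g (d x y / 2)) = d x y / 2 & d (g (d x y / 2)) y = d x y / 2].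
Proof.
move=> [g0 [gL [gS gd]]] dxy0; have mid : 0 <= d x y / 2 <= d x y by lra.
split; first exact: gS.
  by rewrite -{1}g0 gd; [rewrite Rminus_0_l Rabs_Ropp Rabs_pos_eq | |]; lra.
by rewrite -{2}gL gd; [rewrite Rabs_minus_sym Rabs_pos_eq | |]; lra.
Qed.

Lemma dE2_eq P Q r : 0 <= r -> (fst P - fst Q)² + (snd P - snd Q)² = r² -> dE2 P Q = r.
Proof. by move=> r0; rewrite /dE2 => ->; exact: sqrt_Rsqr. Qed.

(* In the equilateral comparison triangle of side [l], the midpoints of two sides are
   [l / 2] apart. *)
Lemma CAT0_equilateral_midsides {T : Type} (S : T -> Prop) (d : T -> T -> R)
    (v : nat -> T) (g : nat -> R -> T) (l : R) :
  CAT0_ineq S d -> 0 < l ->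
  (forall k : nat, (k < 3)%nat -> S (v k)) ->
  (forall k : nat, (k < 3)%nat -> geodesic S d (v k) (v (succ3 k)) (g k)) ->
  (forall k : nat, (k < 3)%nat -> d (v k) (v (succ3 k)) = l) ->
  d (g 0%nat (l / 2)) (g 2%nat (l / 2)) <= l / 2.
Proof.
move=> cat l0 vS vg vd.
have s3 : sqrt 3 * sqrt 3 = 3 by apply: sqrt_sqrt; lra.
pose V (k : nat) : R * R := match k with 0%nat => (0, 0) | 1%nat => (l, 0) | _ => (l / 2, l * sqrt 3 / 2) end.
have VE k : (k < 3)%nat -> dE2 (V k) (V (succ3 k)) = d (v k) (v (succ3 k)).
  by case: k => [|[|[|k]]] // _; rewrite vd //; apply: dE2_eq; rewrite /Rsqr /=; try lra; nra.
have := cat v g V vS vg VE 0%nat 2%nat (l / 2) (l / 2) isT isT.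
rewrite !vd //= => /(_ ltac:(lra) ltac:(lra)); congr Rle.
have half : l / 2 / l = 1 / 2 by field; lra.
apply: dE2_eq; rewrite /cmp_pt /Rsqr /= ?half; first lra.
transitivity (l * l / 16 + l * l * (sqrt 3 * sqrt 3) / 16); first field.
by rewrite s3; field.
Qed.

Section CSN.
Variable m : nat.
Local Notation n := m.+4.

Lemma split12_neq13 : split12 m != split13 m.
Proof. by apply/eqP => /setP /(_ (x3 m)); rewrite !inE. Qed.
Lemma split12_neq23 : split12 m != split23 m.
Proof. by apply/eqP => /setP /(_ (x1 m)); rewrite !inE. Qed.
Lemma split13_neq23 : split13 m != split23 m.
Proof. by apply/eqP => /setP /(_ (x2 m)); rewrite !inE. Qed.

Let c3_1 := comb3_1 split12_neq13 split12_neq23.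
Let c3_2 := comb3_2 split12_neq13 split13_neq23.
Let c3_3 := comb3_3 split12_neq23 split13_neq23.

Local Hint Resolve split12_neq13 split12_neq23 split13_neq23 : core.
Local Hint Resolve nontriv_split12 nontriv_split13 nontriv_split23 : core.
Local Hint Resolve circular1_split12 circular1_split23 circular12_split12 : core.
Local Hint Resolve circular12_split13 circular01_split13 circular01_split23 : core.

Local Notation c3 := (comb3 (split12 m) (split13 m) (split23 m)).
Local Notation dist := (dist3 (split12 m) (split13 m) (split23 m)).
Local Notation supported := (supported3 (split12 m) (split13 m) (split23 m)).

Definition vertex (k : nat) : pt n :=
  match k with 0%nat => c3 1 0 0 | 1%nat => c3 0 1 0 | _ => c3 0 0 1 end.

Definition side_perm (k : nat) : {perm 'I_n} :=
  match k with 0%nat => tperm (x1 m) (x2 m) | 1%nat => tperm (x0 m) (x1 m) | _ => 1%g end.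

Definition side (k : nat) (s : R) : pt n := lerp (vertex k) (vertex (succ3 k)) (s / sqrt 2).

Lemma vertex_in_orthant k : (k < 3)%nat ->
  in_orthant (side_perm k) (vertex k) /\ in_orthant (side_perm k) (vertex (succ3 k)).
Proof.
case: k => [|[|[|k]]] // _; split; apply: in_orthant_comb3 => //; try lra.
all: by move=> _ /=; auto.
Qed.

Lemma vertex_in_CSN k : (k < 3)%nat -> in_CSN (vertex k).
Proof. by move=> /vertex_in_orthant [ok _]; exists (side_perm k). Qed.

Lemma vertex_supported k : supported (vertex k).
Proof. by case: k => [|[|k]]; exact: comb3_supported. Qed.

Lemma dist_vertex k : (k < 3)%nat -> dist (vertex k) (vertex (succ3 k)) = sqrt 2.
Proof.
have s2 : sqrt 2 * sqrt 2 = 2 by apply: sqrt_sqrt; lra.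
have s2pos := sqrt_pos 2.
by case: k => [|[|[|k]]] // _; apply: dist3_eq; rewrite //= !(c3_1, c3_2, c3_3) /Rsqr s2; lra.
Qed.

Section Glued.
Variable d : pt n -> pt n -> R.
Hypothesis hd : forall x y : pt n, in_CSN x -> in_CSN y -> is_glb (string_lengths x y) (d x y).

Let dist_le_glued := dist3_le_glued split12_neq13 split12_neq23 split13_neq23 hd.

Lemma glued_vertex k : (k < 3)%nat -> d (vertex k) (vertex (succ3 k)) = sqrt 2.
Proof.
move=> k3; have [ok ok'] := vertex_in_orthant k3.
rewrite (glued_supported3 split12_neq13 split12_neq23 split13_neq23 hd ok ok'
  (vertex_supported _) (vertex_supported _)).
exact: dist_vertex.
Qed.

Lemma side_geodesic k : (k < 3)%nat ->
  geodesic (@in_CSN n) d (vertex k) (vertex (succ3 k)) (side k).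
Proof.
move=> k3; have [ok ok'] := vertex_in_orthant k3.
have dpos : 0 < dist (vertex k) (vertex (succ3 k)).
  by rewrite dist_vertex //; apply: sqrt_lt_R0; lra.
have := lerp_geodesic split12_neq13 split12_neq23 split13_neq23 hd ok ok'
  (vertex_supported _) (vertex_supported _) dpos.
by rewrite dist_vertex.
Qed.

Lemma side_midpoints :
  side 0 (sqrt 2 / 2) = c3 (1 / 2) (1 / 2) 0 /\ side 2 (sqrt 2 / 2) = c3 (1 / 2) 0 (1 / 2).
Proof.
have half : sqrt 2 / 2 / sqrt 2 = 1 / 2 by field; apply: Rgt_not_eq; apply: sqrt_lt_R0; lra.
by split; rewrite /side lerp_comb3 half; congr comb3; field.
Qed.

Lemma side_midpoint_in_CSN k : (k < 3)%nat -> in_CSN (side k (sqrt 2 / 2)).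
Proof.
move=> k3; have [_ [_ [gS _]]] := side_geodesic k3; apply: gS.
by rewrite glued_vertex //; have := sqrt_pos 2; lra.
Qed.

Lemma dist_midpoints : dist (c3 (1 / 2) (1 / 2) 0) (c3 (1 / 2) 0 (1 / 2)) = sqrt 2 / 2.
Proof.
have s2 : sqrt 2 * sqrt 2 = 2 by apply: sqrt_sqrt; lra.
apply: dist3_eq; first by have := sqrt_pos 2; lra.
rewrite !(c3_1, c3_2, c3_3) /Rsqr.
by transitivity (sqrt 2 * sqrt 2 / 4); [rewrite s2 | ]; field.
Qed.

Lemma CSN_not_CAT0 : ~ CAT0 (@in_CSN n) d.
Proof.
move=> [geo cat].
have s2 : 0 < sqrt 2 by apply: sqrt_lt_R0; lra.
have close := CAT0_equilateral_midsides cat s2 vertex_in_CSN side_geodesic glued_vertex.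
have cm1 := side_midpoint_in_CSN (k := 0) isT.
have cm2 := side_midpoint_in_CSN (k := 2) isT.
case: side_midpoints close cm1 cm2 => -> -> close cm1 cm2.
set m1 := c3 _ _ _ in close cm1; set m2 := c3 _ _ _ in close cm2.
have [g gm] := geo m1 m2 cm1 cm2.
have d0 : 0 <= d m1 m2.
  by apply: (Rle_trans _ (dist m1 m2)); [exact: dist3_ge0 | exact: dist_le_glued].
have [hS hm1 hm2] := geodesic_midpoint gm d0.
set h := g _ in hS hm1 hm2.
have [] := @midpoint_rigid3 _ (split12 m) (split13 m) (split23 m) m1 m2 h (d m1 m2 / 2).
- by rewrite -hm1; exact: dist_le_glued.
- by rewrite -hm2; exact: dist_le_glued.
- by rewrite dist_midpoints; lra.
rewrite /m1 /m2 !c3_1 !c3_2 !c3_3 => h1 h2 h3.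
case: hS => p hp.
have circ A : h A <> 0 -> circular p A by move=> /(proj2 (hp A)) [].
by apply: (@split_quartet m p); split; apply: circ; lra.
Qed.

End Glued.
End CSN.

Local Close Scope R_scope.

Theorem proposition6 (n : nat) (hn : (4 <= n)%N) (d : pt n -> pt n -> R)
  (hd : forall x y : pt n, in_CSN x -> in_CSN y ->
          is_glb (string_lengths x y) (d x y)) :
  ~ CAT0 (@in_CSN n) d.
Proof. by case: n hn d hd => [|[|[|[|m]]]] // _ d hd; exact: CSN_not_CAT0 hd. Qed.
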